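(* $\mathsf{LC}+\Box\bot$ is conservative over $\mathsf{IPC}$ for non-modal propositions: for every non-modal proposition $A$, if $\mathsf{LC}+\Box\bot\vdash A$ then $\mathsf{IPC}\vdash A$.
   Context: Modal language: propositional variables, $\bot$, $\wedge,\vee,\to$, $\Box$; non-modal propositions are those without $\Box$. $\mathsf{iGL}$: intuitionistic propositional logic in the modal language plus $\Box(A\to B)\to(\Box A\to\Box B)$, $\Box A\to\Box\Box A$, $\Box(\Box A\to A)\to\Box A$, closed under modus ponens and necessitation. $\mathsf{LC}:=\mathsf{iGL}+\{A\to\Box A\}$; $\mathsf{LC}+\Box\bot$ adds the axiom $\Box\bot$. *)

Inductive form : Type :=
| Var : nat -> form
| Bot : form
| And : form -> form -> form
| Or  : form -> form -> form
| Imp : form -> form -> form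
| Box : form -> form.

Fixpoint nonmodal (A : form) : Prop :=
  match A with
  | Var _ | Bot => True
  | And B C | Or B C | Imp B C => nonmodal B /\ nonmodal C
  | Box _ => False
  end.

Inductive ipc_axiom : form -> Prop :=
| ax_K  : forall A B, ipc_axiom (Imp A (Imp B A))
| ax_S  : forall A B C,
    ipc_axiom (Imp (Imp A (Imp B C)) (Imp (Imp A B) (Imp A C)))
| ax_AndI : forall A B, ipc_axiom (Imp A (Imp B (And A B)))
| ax_AndE1 : forall A B, ipc_axiom (Imp (And A B) A)
| ax_AndE2 : forall A B, ipc_axiom (Imp (And A B) B)
| ax_OrI1 : forall A B, ipc_axiom (Imp A (Or A B))
| ax_OrI2 : forall A B, ipc_axiom (Imp B (Or A B))
| ax_OrE : forall A B C,
    ipc_axiom (Imp (Imp A C) (Imp (Imp B C) (Imp (Or A B) C)))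
| ax_Efq : forall A, ipc_axiom (Imp Bot A).

Inductive IPC_prv : form -> Prop :=
| ipc_ax : forall A, ipc_axiom A -> IPC_prv A
| ipc_mp : forall A B, IPC_prv (Imp A B) -> IPC_prv A -> IPC_prv B.

Inductive LCbot_axiom : form -> Prop :=
| ax_Kbox : forall A B, LCbot_axiom (Imp (Box (Imp A B)) (Imp (Box A) (Box B)))
| ax_4 : forall A, LCbot_axiom (Imp (Box A) (Box (Box A)))
| ax_Lob : forall A, LCbot_axiom (Imp (Box (Imp (Box A) A)) (Box A))
| ax_LC : forall A, LCbot_axiom (Imp A (Box A))
| ax_BoxBot : LCbot_axiom (Box Bot).

(* LC + Box bot: iGL + {A -> Box A} + Box bot, closed under MP and necessitation. *)
Inductive LCbot_prv : form -> Prop :=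
| lc_ipc : forall A, ipc_axiom A -> LCbot_prv A
| lc_ax  : forall A, LCbot_axiom A -> LCbot_prv A
| lc_mp  : forall A B, LCbot_prv (Imp A B) -> LCbot_prv A -> LCbot_prv B
| lc_nec : forall A, LCbot_prv A -> LCbot_prv (Box A).


(* Read every boxed formula as the true proposition [Bot -> Bot].  Under this
   reading the box axioms K, 4, Löb, [A -> Box A] and [Box Bot] become IPC
   theorems of the form [X -> ... -> Bot -> Bot], necessitation concludes
   [Bot -> Bot], and the IPC axioms and modus ponens are preserved.  Since the
   reading is the identity on non-modal formulas, the conservativity follows. *)

Definition Top : form := Imp Bot Bot.

Fixpoint box_top (A : form) : form :=
  match A with
  | Var n => Var n
  | Bot => Bot
  | And B C => And (box_top B) (box_top C)
  | Or B C => Or (box_top B) (box_top C)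
  | Imp B C => Imp (box_top B) (box_top C)
  | Box _ => Top
  end.

Lemma box_top_nonmodal (A : form) : nonmodal A -> box_top A = A.
Proof.
  induction A as [n | | B IHB C IHC | B IHB C IHC | B IHB C IHC | B _];
    simpl; intros HA; try reflexivity; try contradiction.
  all: destruct HA as [HB HC]; rewrite IHB, IHC by assumption; reflexivity.
Qed.

Lemma IPC_Top : IPC_prv Top.
Proof. apply ipc_ax, ax_Efq. Qed.

Lemma IPC_weaken (X Y : form) : IPC_prv Y -> IPC_prv (Imp X Y).
Proof. intros HY. eapply ipc_mp; [apply ipc_ax, ax_K | exact HY]. Qed.

Lemma ipc_axiom_box_top (A : form) : ipc_axiom A -> ipc_axiom (box_top A).
Proof. destruct 1; simpl; constructor. Qed.

Lemma LCbot_axiom_box_top (A : form) : LCbot_axiom A -> IPC_prv (box_top A).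
Proof.
  destruct 1; simpl; repeat (first [apply IPC_Top | apply IPC_weaken]).
Qed.

Lemma LCbot_prv_box_top (A : form) : LCbot_prv A -> IPC_prv (box_top A).
Proof.
  induction 1 as [A HA | A HA | A B _ IHAB _ IHA | A _ _].
  - apply ipc_ax, ipc_axiom_box_top, HA.
  - apply LCbot_axiom_box_top, HA.
  - exact (ipc_mp _ _ IHAB IHA).
  - apply IPC_Top.
Qed.

Theorem theorem4p27 (A : form) :
  nonmodal A -> LCbot_prv A -> IPC_prv A.
Proof.
  intros HA Hprv. rewrite <- (box_top_nonmodal A HA).
  apply LCbot_prv_box_top, Hprv.
Qed.
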